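(* Let $\Gamma$ and $\Delta$ be finite subsets of ${\sf Frm}$. Then $\vdash_{\sf WF_{N_2}}\bigwedge\Gamma\rightarrow\bigvee\Delta$ if and only if $\vdash_{\sf M_{Nec}}(\bigwedge\Gamma\rightarrow\bigvee\Delta)^\square$, i.e. $\vdash_{\sf M_{Nec}}\square(\bigwedge\Gamma^\square\supset\bigvee\Delta^\square)$.
   Context: Language: countably many atoms $p,q,\dots$, the constant $\bot$, and binary connectives $\wedge,\vee,\rightarrow$ ($\rightarrow$ is strict implication). ${\sf Frm}$ is the set of formulas built from atoms and $\bot$ with $\wedge,\vee,\rightarrow$; $A,B,C,D$ range over ${\sf Frm}$; $\supset$ denotes material implication. The Hilbert system ${\sf WF_{N_2}}$ over ${\sf Frm}$ has axiom schemes $A\rightarrow(A\vee B)$; $B\rightarrow(A\vee B)$; $(A\wedge B)\rightarrow A$; $(A\wedge B)\rightarrow B$; $A\wedge(B\vee C)\rightarrow(A\wedge B)\vee(A\wedge C)$; $A\rightarrow A$; $\bot\rightarrow A$; and rules (from theorems to a theorem): from $A$ and $A\rightarrow B$ infer $B$; from $A$ infer $B\rightarrow A$; from $A\rightarrow B$ and $B\rightarrow C$ infer $A\rightarrow C$; from $A\rightarrow B$ and $A\rightarrow C$ infer $A\rightarrow(B\wedge C)$; from $A\rightarrow C$ and $B\rightarrow C$ infer $(A\vee B)\rightarrow C$; from $A$ and $B$ infer $A\wedge B$; (${\sf N_2}$) from $C\rightarrow A\vee D$ and $C\wedge B\rightarrow D$ infer $(A\rightarrow B)\rightarrow(C\rightarrow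 D)$. $\vdash_{\sf WF_{N_2}}A$ means $A$ is a theorem of this system. $\bigwedge\Gamma$ and $\bigvee\Delta$ denote the conjunction and disjunction of the members (empty conjunction read as $\top:=\bot\rightarrow\bot$, empty disjunction as $\bot$). The modal language $\mathcal{L}_\square$ has atoms, $\bot$, binary $\wedge,\vee,\supset$ and unary $\square$. ${\sf M_{Nec}}$ is the smallest set of $\mathcal{L}_\square$-formulas containing all classical propositional tautologies and $\square(\bot\supset\bot)$, and closed under modus ponens, uniform substitution, and the rule RM: from $A\supset B$ infer $\square A\supset\square B$ (equivalently, the monotonic classical modal logic ${\sf M}$ extended by the necessitation rule). The $\square$-translation is: $p^\square=p$, $\bot^\square=\bot$, $(A\circ B)^\square=A^\square\circ B^\square$ for $\circ\in\{\wedge,\vee,\supset\}$, $(A\rightarrow B)^\square=\square(A^\square\supset B^\square)$; $\Gamma^\square=\{A^\square:A\in\Gamma\}$. *)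

From Stdlib Require Import List.
Import ListNotations.

Inductive frm : Type :=
| Atom : nat -> frm
| Bot : frm
| And : frm -> frm -> frm
| Or : frm -> frm -> frm
| Imp : frm -> frm -> frm.   (* strict implication "->" *)

Definition Top : frm := Imp Bot Bot.

Fixpoint bigAnd (l : list frm) : frm :=
  match l with
  | [] => Top
  | [A] => A
  | A :: l' => And A (bigAnd l')
  end.

Fixpoint bigOr (l : list frm) : frm :=
  match l with
  | [] => Bot
  | [A] => A
  | A :: l' => Or A (bigOr l')
  end.

Inductive WFN2 : frm -> Prop :=
| ax_or1 A B : WFN2 (Imp A (Or A B))
| ax_or2 A B : WFN2 (Imp B (Or A B))
| ax_and1 A B : WFN2 (Imp (And A B) A)
| ax_and2 A B : WFN2 (Imp (And A B) B)
| ax_distr A B C : WFN2 (Imp (And A (Or B C)) (Or (And A B) (And A C)))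
| ax_id A : WFN2 (Imp A A)
| ax_bot A : WFN2 (Imp Bot A)
| r_mp A B : WFN2 A -> WFN2 (Imp A B) -> WFN2 B
| r_af A B : WFN2 A -> WFN2 (Imp B A)
| r_trans A B C : WFN2 (Imp A B) -> WFN2 (Imp B C) -> WFN2 (Imp A C)
| r_andI A B C : WFN2 (Imp A B) -> WFN2 (Imp A C) -> WFN2 (Imp A (And B C))
| r_orE A B C : WFN2 (Imp A C) -> WFN2 (Imp B C) -> WFN2 (Imp (Or A B) C)
| r_adj A B : WFN2 A -> WFN2 B -> WFN2 (And A B)
| r_N2 A B C D : WFN2 (Imp C (Or A D)) -> WFN2 (Imp (And C B) D) ->
                 WFN2 (Imp (Imp A B) (Imp C D)).

Inductive mform : Type :=
| MAtom : nat -> mform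
| MBot : mform
| MAnd : mform -> mform -> mform
| MOr : mform -> mform -> mform
| MImp : mform -> mform -> mform
| MBox : mform -> mform.

Fixpoint meval (v : nat -> bool) (b : mform -> bool) (A : mform) : bool :=
  match A with
  | MAtom n => v n
  | MBot => false
  | MAnd A1 A2 => andb (meval v b A1) (meval v b A2)
  | MOr A1 A2 => orb (meval v b A1) (meval v b A2)
  | MImp A1 A2 => orb (negb (meval v b A1)) (meval v b A2)
  | MBox A1 => b (MBox A1)
  end.

Definition tautology (A : mform) : Prop :=
  forall (v : nat -> bool) (b : mform -> bool), meval v b A = true.

Fixpoint msubst (s : nat -> mform) (A : mform) : mform :=
  match A with
  | MAtom n => s n
  | MBot => MBot
  | MAnd A1 A2 => MAnd (msubst s A1) (msubst s A2)
  | MOr A1 A2 => MOr (msubst s A1) (msubst s A2)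
  | MImp A1 A2 => MImp (msubst s A1) (msubst s A2)
  | MBox A1 => MBox (msubst s A1)
  end.

Inductive MNec : mform -> Prop :=
| m_taut A : tautology A -> MNec A
| m_nec_top : MNec (MBox (MImp MBot MBot))
| m_mp A B : MNec A -> MNec (MImp A B) -> MNec B
| m_subst s A : MNec A -> MNec (msubst s A)
| m_RM A B : MNec (MImp A B) -> MNec (MImp (MBox A) (MBox B)).

Fixpoint boxtr (A : frm) : mform :=
  match A with
  | Atom n => MAtom n
  | Bot => MBot
  | And A1 A2 => MAnd (boxtr A1) (boxtr A2)
  | Or A1 A2 => MOr (boxtr A1) (boxtr A2)
  | Imp A1 A2 => MBox (MImp (boxtr A1) (boxtr A2))
  end.

From Stdlib Require Import Classical ClassicalEpsilon Cantor Lia.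

(* Both logics are interpreted in monotone neighbourhood models whose
   neighbourhoods always contain the whole space.  M_Nec is sound for them,
   and so is the box translation of WF_N2.  Validity of [box A] implies
   validity of [A] (add a fresh world that sees exactly the old ones), so a
   theorem [A -> B] of WF_N2 makes [A^box ⊃ B^box] valid.  Conversely, the
   prime filters of the modus-ponens-free fragment of WF_N2 form a canonical
   model, in which a world G has as neighbourhoods the supersets of
   [{H | A ∈ H -> B ∈ H}] for [A -> B ∈ G]; rule N2 is exactly what the truth
   lemma needs for implications.  Hence validity of [A^box ⊃ B^box] gives a
   modus-ponens-free derivation of [A -> B], and such derivations translate
   step by step into M_Nec, each implication [C -> D] into [C^box ⊃ D^box]. *)

Fixpoint forces {W : Type} (N : W -> (W -> Prop) -> Prop) (V : nat -> W -> Prop)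
  (w : W) (A : mform) : Prop :=
  match A with
  | MAtom n => V n w
  | MBot => False
  | MAnd A1 A2 => forces N V w A1 /\ forces N V w A2
  | MOr A1 A2 => forces N V w A1 \/ forces N V w A2
  | MImp A1 A2 => forces N V w A1 -> forces N V w A2
  | MBox A1 => N w (fun x => forces N V x A1)
  end.

Definition monotone {W : Type} (N : W -> (W -> Prop) -> Prop) : Prop :=
  forall w (X Y : W -> Prop), (forall x, X x -> Y x) -> N w X -> N w Y.

Definition contains_unit {W : Type} (N : W -> (W -> Prop) -> Prop) : Prop :=
  forall w, N w (fun _ => True).

Definition valid (A : mform) : Prop :=
  forall (W : Type) (N : W -> (W -> Prop) -> Prop) (V : nat -> W -> Prop),
    monotone N -> contains_unit N -> forall w, forces N V w A.

Definition bool_of (P : Prop) : bool :=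
  if excluded_middle_informative P then true else false.

Lemma bool_of_true (P : Prop) : bool_of P = true <-> P.
Proof.
  unfold bool_of; destruct (excluded_middle_informative P); split; congruence || tauto.
Qed.

Lemma meval_bool_of_forces {W : Type} N V (w : W) (A : mform) :
  meval (fun n => bool_of (V n w)) (fun B => bool_of (forces N V w B)) A = true
  <-> forces N V w A.
Proof.
  induction A; simpl.
  - apply bool_of_true.
  - split; congruence || tauto.
  - rewrite Bool.andb_true_iff; tauto.
  - rewrite Bool.orb_true_iff; tauto.
  - rewrite Bool.orb_true_iff, Bool.negb_true_iff, <- Bool.not_true_iff_false; tauto.
  - apply (bool_of_true (forces N V w (MBox A))).
Qed.

Lemma forces_msubst {W : Type} N V (w : W) s (A : mform) :
  monotone N ->
  forces N V w (msubst s A) <-> forces N (fun n x => forces N V x (s n)) w A.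
Proof.
  intro Nmon; revert w; induction A; intro w; simpl; try tauto;
    try (rewrite IHA1, IHA2; tauto).
  split; apply Nmon; intro x; apply IHA.
Qed.

Lemma box_of_forall {W : Type} (N : W -> (W -> Prop) -> Prop) w (P : W -> Prop) :
  monotone N -> contains_unit N -> (forall x, P x) -> N w P.
Proof. intros Nmon Nunit H; apply (Nmon w (fun _ => True)); auto. Qed.

Lemma MNec_valid A : MNec A -> valid A.
Proof.
  induction 1; intros W N V Nmon Nunit w.
  - apply meval_bool_of_forces, H.
  - simpl; apply box_of_forall; simpl; auto.
  - apply (IHMNec2 W N V Nmon Nunit w), IHMNec1; auto.
  - apply forces_msubst, IHMNec; auto.
  - simpl; apply Nmon; intro x; apply (IHMNec W N V Nmon Nunit x).
Qed.

(* The extended model has one new world [None], whose only neighbourhoods are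
   the sets containing every old world; the old worlds keep their behaviour. *)
Definition root_nbhd {W : Type} (N : W -> (W -> Prop) -> Prop)
  (x : option W) (X : option W -> Prop) : Prop :=
  match x with
  | Some v => N v (fun y => X (Some y))
  | None => forall y, X (Some y)
  end.

Definition root_val {W : Type} (V : nat -> W -> Prop) n (x : option W) : Prop :=
  match x with Some v => V n v | None => False end.

Lemma forces_root_Some {W : Type} N V (v : W) A :
  monotone N -> forces (root_nbhd N) (root_val V) (Some v) A <-> forces N V v A.
Proof.
  intro Nmon; revert v; induction A; intro v; simpl; try tauto;
    try (rewrite IHA1, IHA2; tauto).
  split; apply Nmon; intro x; apply IHA.
Qed.

Lemma valid_box_inv A : valid (MBox A) -> valid A.
Proof.
  intros H W N V Nmon Nunit w.
  assert (Rmon : monotone (root_nbhd N)).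
  { intros [u|] X Y HXY; simpl; auto; apply Nmon; auto. }
  assert (Runit : contains_unit (root_nbhd N)) by (intros [u|]; simpl; auto).
  apply forces_root_Some; auto.
  exact (H _ (root_nbhd N) (root_val V) Rmon Runit None w).
Qed.

Lemma WFN2_valid C : WFN2 C -> valid (boxtr C).
Proof.
  induction 1; intros W N V Nmon Nunit w; simpl;
    try (apply box_of_forall; auto; intro x; simpl; tauto).
  2-4: apply valid_box_inv in IHWFN2_1, IHWFN2_2;
    apply box_of_forall; auto; intro x;
    specialize (IHWFN2_1 W N V Nmon Nunit x); specialize (IHWFN2_2 W N V Nmon Nunit x);
    simpl in *; tauto.
  - apply valid_box_inv in IHWFN2_2.
    exact (IHWFN2_2 W N V Nmon Nunit w (IHWFN2_1 W N V Nmon Nunit w)).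
  - split; [apply IHWFN2_1 | apply IHWFN2_2]; auto.
  - apply valid_box_inv in IHWFN2_1, IHWFN2_2.
    apply box_of_forall; auto; intro x; apply Nmon; intro y;
      specialize (IHWFN2_1 W N V Nmon Nunit y); specialize (IHWFN2_2 W N V Nmon Nunit y);
      simpl in *; tauto.
Qed.

Inductive WFN2_mpfree : frm -> Prop :=
| mf_or1 A B : WFN2_mpfree (Imp A (Or A B))
| mf_or2 A B : WFN2_mpfree (Imp B (Or A B))
| mf_and1 A B : WFN2_mpfree (Imp (And A B) A)
| mf_and2 A B : WFN2_mpfree (Imp (And A B) B)
| mf_distr A B C : WFN2_mpfree (Imp (And A (Or B C)) (Or (And A B) (And A C)))
| mf_id A : WFN2_mpfree (Imp A A)
| mf_bot A : WFN2_mpfree (Imp Bot A)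
| mf_af A B : WFN2_mpfree A -> WFN2_mpfree (Imp B A)
| mf_trans A B C :
    WFN2_mpfree (Imp A B) -> WFN2_mpfree (Imp B C) -> WFN2_mpfree (Imp A C)
| mf_andI A B C :
    WFN2_mpfree (Imp A B) -> WFN2_mpfree (Imp A C) -> WFN2_mpfree (Imp A (And B C))
| mf_orE A B C :
    WFN2_mpfree (Imp A C) -> WFN2_mpfree (Imp B C) -> WFN2_mpfree (Imp (Or A B) C)
| mf_adj A B : WFN2_mpfree A -> WFN2_mpfree B -> WFN2_mpfree (And A B)
| mf_N2 A B C D :
    WFN2_mpfree (Imp C (Or A D)) -> WFN2_mpfree (Imp (And C B) D) ->
    WFN2_mpfree (Imp (Imp A B) (Imp C D)).

Lemma WFN2_mpfree_WFN2 C : WFN2_mpfree C -> WFN2 C.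
Proof. induction 1; try (econstructor; eauto; fail). Qed.

Lemma MNec_taut_mp1 X Y :
  (forall v b, meval v b X = true -> meval v b Y = true) -> MNec X -> MNec Y.
Proof.
  intros H HX; apply (m_mp X); auto; apply m_taut; intros v b; simpl.
  specialize (H v b); destruct (meval v b X), (meval v b Y); simpl; auto.
Qed.

Lemma MNec_taut_mp2 X1 X2 Y :
  (forall v b, meval v b X1 = true -> meval v b X2 = true -> meval v b Y = true) ->
  MNec X1 -> MNec X2 -> MNec Y.
Proof.
  intros H H1 H2; apply (m_mp X2); auto; apply (m_mp X1); auto; apply m_taut.
  intros v b; simpl.
  specialize (H v b); destruct (meval v b X1), (meval v b X2), (meval v b Y); simpl; auto.
Qed.

Lemma MNec_nec X : MNec X -> MNec (MBox X).
Proof.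
  intro H; apply (m_mp (MBox (MImp MBot MBot))); [apply m_nec_top|].
  apply m_RM, (MNec_taut_mp1 X); auto.
Qed.

Definition MNec_unboxed (C : frm) : Prop :=
  match C with
  | Imp A B => MNec (MImp (boxtr A) (boxtr B))
  | _ => MNec (boxtr C)
  end.

Lemma MNec_unboxed_boxtr C : MNec_unboxed C -> MNec (boxtr C).
Proof. destruct C; simpl; auto using MNec_nec. Qed.

Ltac truth_table := intros v b; simpl;
  repeat match goal with |- context [meval v b ?X] => destruct (meval v b X) end;
  simpl; auto.

Lemma WFN2_mpfree_MNec_unboxed C : WFN2_mpfree C -> MNec_unboxed C.
Proof.
  induction 1; simpl; try (apply m_taut; truth_table; fail);
    try (eapply MNec_taut_mp2; [| exact IHWFN2_mpfree1 | exact IHWFN2_mpfree2];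
         truth_table; fail).
  - apply (MNec_taut_mp1 (boxtr A)); [truth_table | apply MNec_unboxed_boxtr; auto].
  - apply MNec_unboxed_boxtr in IHWFN2_mpfree1, IHWFN2_mpfree2.
    eapply MNec_taut_mp2; [| exact IHWFN2_mpfree1 | exact IHWFN2_mpfree2]; truth_table.
  - apply m_RM.
    eapply MNec_taut_mp2; [| exact IHWFN2_mpfree1 | exact IHWFN2_mpfree2]; truth_table.
Qed.

Definition entails (A B : frm) : Prop := WFN2_mpfree (Imp A B).

Lemma entails_refl A : entails A A.
Proof. apply mf_id. Qed.

Lemma entails_trans A B C : entails A B -> entails B C -> entails A C.
Proof. apply mf_trans. Qed.

Fixpoint frm_code (A : frm) : nat :=
  match A with
  | Atom n => to_nat (0, n)
  | Bot => to_nat (1, 0)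
  | And a b => to_nat (2, to_nat (frm_code a, frm_code b))
  | Or a b => to_nat (3, to_nat (frm_code a, frm_code b))
  | Imp a b => to_nat (4, to_nat (frm_code a, frm_code b))
  end.

Lemma frm_code_inj A B : frm_code A = frm_code B -> A = B.
Proof.
  revert B; induction A; intros [] H; cbn [frm_code] in H;
    apply to_nat_inj, pair_equal_spec in H; destruct H as [Htag H];
    try discriminate; try (subst; reflexivity);
    apply to_nat_inj, pair_equal_spec in H; destruct H; f_equal; auto.
Qed.

Definition frm_decode (n : nat) : frm :=
  epsilon (inhabits Bot) (fun f => frm_code f = n).

Lemma frm_decode_code A : frm_decode (frm_code A) = A.
Proof.
  apply frm_code_inj, (epsilon_spec (inhabits Bot) (fun f => frm_code f = frm_code A)).
  exists A; reflexivity.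
Qed.

Record prime_filter (G : frm -> Prop) : Prop := {
  pf_up : forall A B, G A -> entails A B -> G B;
  pf_conj : forall A B, G A -> G B -> G (And A B);
  pf_top : G Top;
  pf_bot : ~ G Bot;
  pf_prime : forall A B, G (Or A B) -> G A \/ G B }.

Section Lindenbaum.

Variables C E : frm.
Hypothesis C_nentails_E : ~ entails C E.

(* A pair [(a, b)] with [a ⊬ b]; the [n]-th formula is added to the left
   component when that keeps [a ⊬ b], and to the right one otherwise. *)
Definition extend_pair (p : frm * frm) (f : frm) : frm * frm :=
  let (a, b) := p in
  if excluded_middle_informative (entails (And a f) b) then (a, Or b f)
  else (And a f, b).

Fixpoint lind_pair (n : nat) : frm * frm :=
  match n with
  | 0 => (C, E)
  | S n => extend_pair (lind_pair n) (frm_decode n)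
  end.

Lemma lind_pair_nentails n : ~ entails (fst (lind_pair n)) (snd (lind_pair n)).
Proof.
  induction n as [|n IHn]; simpl; auto.
  destruct (lind_pair n) as [a b]; simpl in *; unfold extend_pair.
  destruct (excluded_middle_informative (entails (And a (frm_decode n)) b)) as [H|H];
    simpl; auto.
  intro H'; apply IHn.
  (* [a ⊢ a ∧ (b ∨ f) ⊢ (a ∧ b) ∨ (a ∧ f) ⊢ b] *)
  apply entails_trans with (And a (Or b (frm_decode n))); [apply mf_andI; [apply mf_id | exact H']|].
  apply entails_trans with (Or (And a b) (And a (frm_decode n))); [apply mf_distr|].
  apply mf_orE; auto using mf_and2.
Qed.

Lemma lind_pair_mono n m :
  n <= m ->
  entails (fst (lind_pair m)) (fst (lind_pair n)) /\
  entails (snd (lind_pair n)) (snd (lind_pair m)).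
Proof.
  induction 1 as [|m _ [IH1 IH2]]; [split; apply entails_refl|].
  assert (Hstep : entails (fst (lind_pair (S m))) (fst (lind_pair m)) /\
                  entails (snd (lind_pair m)) (snd (lind_pair (S m)))).
  { simpl; destruct (lind_pair m) as [a b]; unfold extend_pair.
    destruct (excluded_middle_informative (entails (And a (frm_decode m)) b)); simpl;
      unfold entails; split; auto using mf_id, mf_or1, mf_and1. }
  destruct Hstep; split; eapply entails_trans; eauto.
Qed.

Definition lind_filter (f : frm) : Prop := exists n, entails (fst (lind_pair n)) f.

Lemma lind_filter_decides f : lind_filter f \/ exists m, entails f (snd (lind_pair m)).
Proof.
  assert (Hs : lind_pair (S (frm_code f)) = extend_pair (lind_pair (frm_code f)) f)
    by (simpl; rewrite frm_decode_code; reflexivity).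
  destruct (lind_pair (frm_code f)) as [a b]; unfold extend_pair in Hs.
  destruct (excluded_middle_informative (entails (And a f) b)).
  - right; exists (S (frm_code f)); rewrite Hs; apply mf_or2.
  - left; exists (S (frm_code f)); rewrite Hs; apply mf_and2.
Qed.

Lemma lind_filter_prime_filter : prime_filter lind_filter.
Proof.
  constructor.
  - intros A B [n H] H'; exists n; eapply entails_trans; eauto.
  - intros A B [n H] [m H']; exists (Nat.max n m).
    destruct (lind_pair_mono n (Nat.max n m)) as [H1 _]; [lia|].
    destruct (lind_pair_mono m (Nat.max n m)) as [H2 _]; [lia|].
    apply mf_andI; [exact (entails_trans _ _ _ H1 H) | exact (entails_trans _ _ _ H2 H')].
  - exists 0; apply mf_af, mf_bot.
  - intros [n H]; apply (lind_pair_nentails n).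
    exact (entails_trans _ _ _ H (mf_bot _)).
  - intros A B [n H].
    destruct (lind_filter_decides A) as [|[i Hi]]; auto.
    destruct (lind_filter_decides B) as [|[j Hj]]; auto.
    exfalso; set (k := Nat.max n (Nat.max i j)).
    destruct (lind_pair_mono n k) as [H1 _]; [lia|].
    destruct (lind_pair_mono i k) as [_ H2]; [lia|].
    destruct (lind_pair_mono j k) as [_ H3]; [lia|].
    apply (lind_pair_nentails k).
    apply entails_trans with (Or A B); [exact (entails_trans _ _ _ H1 H)|].
    apply mf_orE; [exact (entails_trans _ _ _ Hi H2) | exact (entails_trans _ _ _ Hj H3)].
Qed.

Lemma lindenbaum : exists G, prime_filter G /\ G C /\ ~ G E.
Proof.
  exists lind_filter; split; [apply lind_filter_prime_filter|split].
  - exists 0; apply entails_refl.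
  - intros [n H]; apply (lind_pair_nentails n).
    destruct (lind_pair_mono 0 n) as [_ H2]; [lia|].
    eapply entails_trans; eauto.
Qed.

End Lindenbaum.

Definition canon_world : Type := { G : frm -> Prop | prime_filter G }.

Definition canon_nbhd (G : canon_world) (X : canon_world -> Prop) : Prop :=
  exists A B, proj1_sig G (Imp A B) /\
    forall H : canon_world, (proj1_sig H A -> proj1_sig H B) -> X H.

Definition canon_val (n : nat) (G : canon_world) : Prop := proj1_sig G (Atom n).

Lemma canon_nbhd_monotone : monotone canon_nbhd.
Proof. intros w X Y HXY [A [B [H1 H2]]]; exists A, B; split; auto. Qed.

Lemma canon_nbhd_contains_unit : contains_unit canon_nbhd.
Proof. intros [G HG]; exists Bot, Bot; split; auto; apply (pf_top _ HG). Qed.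

Lemma entails_of_prime_filters A B :
  (forall H : canon_world, proj1_sig H A -> proj1_sig H B) -> entails A B.
Proof.
  intro Hyp; apply NNPP; intro Hn.
  destruct (lindenbaum _ _ Hn) as [G [HG [HA HB]]].
  exact (HB (Hyp (exist _ G HG) HA)).
Qed.

Lemma canon_imp_closed (G : canon_world) A B C1 C2 :
  proj1_sig G (Imp A B) ->
  (forall H : canon_world,
      (proj1_sig H A -> proj1_sig H B) -> proj1_sig H C1 -> proj1_sig H C2) ->
  proj1_sig G (Imp C1 C2).
Proof.
  destruct G as [G HG]; simpl; intros HAB K.
  apply (pf_up _ HG _ _ HAB), mf_N2; apply entails_of_prime_filters;
    intros [H HH] h1; simpl in *.
  - destruct (classic (H A)) as [hA|hA].
    + apply (pf_up _ HH _ _ hA), mf_or1.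
    + apply (pf_up _ HH C2), mf_or2; apply (K (exist _ H HH)); simpl; tauto.
  - apply (K (exist _ H HH)); simpl.
    + intros _; apply (pf_up _ HH _ _ h1), mf_and2.
    + apply (pf_up _ HH _ _ h1), mf_and1.
Qed.

Lemma canon_truth C (G : canon_world) :
  forces canon_nbhd canon_val G (boxtr C) <-> proj1_sig G C.
Proof.
  revert G; induction C as [n| |C1 IH1 C2 IH2|C1 IH1 C2 IH2|C1 IH1 C2 IH2];
    intros G; simpl; rewrite ?IH1, ?IH2; destruct G as [G HG]; simpl.
  - reflexivity.
  - split; [tauto | apply (pf_bot _ HG)].
  - split.
    + intros [H1 H2]; apply (pf_conj _ HG); auto.
    + intro H; split; [apply (pf_up _ HG _ _ H), mf_and1 | apply (pf_up _ HG _ _ H), mf_and2].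
  - split.
    + intros [H|H]; [apply (pf_up _ HG _ _ H), mf_or1 | apply (pf_up _ HG _ _ H), mf_or2].
    + apply (pf_prime _ HG).
  - split.
    + intros [A [B [HAB K]]]; apply (canon_imp_closed (exist _ G HG) A B); auto.
      intros H HH; specialize (K H HH); simpl in K; rewrite IH1, IH2 in K; exact K.
    + intro H; exists C1, C2; split; auto.
      intros H' HH'; simpl; rewrite IH1, IH2; exact HH'.
Qed.

Lemma WFN2_mpfree_complete C E :
  valid (MImp (boxtr C) (boxtr E)) -> WFN2_mpfree (Imp C E).
Proof.
  intro Hv; apply NNPP; intro Hn.
  destruct (lindenbaum _ _ Hn) as [G [HG [HC HE]]].
  specialize (Hv canon_world canon_nbhd canon_val canon_nbhd_monotone
                 canon_nbhd_contains_unit (exist _ G HG)).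
  simpl in Hv; rewrite !canon_truth in Hv; exact (HE (Hv HC)).
Qed.

Lemma WFN2_imp_iff_MNec C E : WFN2 (Imp C E) <-> MNec (boxtr (Imp C E)).
Proof.
  split; intro H.
  - apply WFN2_valid, valid_box_inv, WFN2_mpfree_complete in H.
    exact (MNec_nec _ (WFN2_mpfree_MNec_unboxed _ H)).
  - apply MNec_valid, valid_box_inv in H.
    apply WFN2_mpfree_WFN2, WFN2_mpfree_complete, H.
Qed.

Theorem theorem4p2 (Gamma Delta : list frm) :
  WFN2 (Imp (bigAnd Gamma) (bigOr Delta)) <->
  MNec (boxtr (Imp (bigAnd Gamma) (bigOr Delta))).
Proof. apply WFN2_imp_iff_MNec. Qed.
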